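(* Let $\widetilde{\mathcal{A}}^+,\widetilde{\mathcal{A}}^-\subseteq\mathbb{R}^d$ be compact and linearly separable, with $$\tilde d:=\max_{\|y\|_*\le1,\ b\in\mathbb{R}} h(y,b;\widetilde{\mathcal{A}}^+,\widetilde{\mathcal{A}}^-)>0,$$ and let $(\tilde y,\tilde b)$ be an optimal solution. Then there exist $\tilde x^+\in\operatorname{conv}(\widetilde{\mathcal{A}}^+)$ and $\tilde x^-\in\operatorname{conv}(\widetilde{\mathcal{A}}^-)$ such that $\tilde y^\top(\tilde x^+-\tilde x^-)=\|\tilde x^+-\tilde x^-\|\,\|\tilde y\|_*$ and $\tilde d\,\|\tilde y\|_*=\tilde y^\top\tilde x^++\tilde b=-\tilde y^\top\tilde x^--\tilde b$; consequently $\tilde d=\|\tilde x^+-\tilde x^-\|/2$ and $\tilde b=-\tilde y^\top(\tilde x^++\tilde x^-)/2$. Furthermore, suppose the norm $\|\cdot\|$ and its dual are strictly convex. If $(\bar y,\bar b)$ satisfies $h(\bar y,\bar b;\widetilde{\mathcal{A}}^+,\widetilde{\mathcal{A}}^-)\ge\bar d>0$, then $\bar y^\top v(\tilde y)\ge \bar d/\tilde d>0$.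
   Context: $\|\cdot\|$ is a norm on $\mathbb{R}^d$ with dual norm $\|y\|_*=\max_{\|w\|\le1}y^\top w$. For $y\ne0$, $v(y)$ denotes a maximizer of $y^\top w$ over $\|w\|\le1$ (unique when $\|\cdot\|$ is strictly convex). Strict convexity of a norm $N$: $N(\beta w+(1-\beta)z)<\beta N(w)+(1-\beta)N(z)$ whenever $\beta\in(0,1)$ and $w,z$ are not collinear. Margin function: $h(y,b;\widetilde{\mathcal{A}}^+,\widetilde{\mathcal{A}}^-)=\min\{\min_{x\in\widetilde{\mathcal{A}}^+}(y^\top x+b),\ \min_{x\in\widetilde{\mathcal{A}}^-}(-y^\top x-b)\}$. *)

From HB Require Import structures.
From mathcomp Require Import all_boot all_order all_algebra.
From mathcomp Require Import all_classical all_reals all_analysis.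
Set Implicit Arguments. Unset Strict Implicit. Unset Printing Implicit Defensive.
Import Order.TTheory GRing.Theory Num.Theory.
Import numFieldTopology.Exports.
Local Open Scope classical_set_scope.
Local Open Scope ring_scope.

Section Defs.
Variables (R : realType) (d : nat).
Notation V := 'rV[R]_d.

Definition dot (y x : V) : R := \sum_(i < d) y ord0 i * x ord0 i.

Definition is_norm (N : V -> R) : Prop :=
  [/\ forall x, 0 <= N x,
      forall x, N x = 0 -> x = 0,
      forall (a : R) x, N (a *: x) = `|a| * N x
    & forall x y, N (x + y) <= N x + N y].

(* dual norm ||y||_* = max_{N w <= 1} y^T w (written as a sup; it is attained) *)
Definition dualnorm (N : V -> R) (y : V) : R :=
  sup [set dot y w | w in [set w : V | N w <= 1]].

(* w is a maximizer of y^T w over the unit ball of N (a choice of v(y)) *)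
Definition is_v (N : V -> R) (y w : V) : Prop :=
  N w <= 1 /\ dot y w = dualnorm N y.

Definition collinear (w z : V) : Prop :=
  exists a b : R, (a != 0 \/ b != 0) /\ a *: w + b *: z = 0.

Definition strictly_convex (N : V -> R) : Prop :=
  forall (beta : R) (w z : V), 0 < beta < 1 -> ~ collinear w z ->
    N (beta *: w + (1 - beta) *: z) < beta * N w + (1 - beta) * N z.

(* margin function h(y,b;A+,A-) (inf = min for compact nonempty sets) *)
Definition margin (y : V) (b : R) (Ap Am : set V) : R :=
  Num.min (inf [set dot y x + b | x in Ap]) (inf [set - dot y x - b | x in Am]).

Definition convhull (A : set V) : set V :=
  [set x | exists (n : nat) (lam : 'I_n -> R) (p : 'I_n -> V),
     [/\ forall i, 0 <= lam i, \sum_(i < n) lam i = 1,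
         forall i, A (p i) & x = \sum_(i < n) lam i *: p i]].

Definition linearly_separable (Ap Am : set V) : Prop :=
  exists (y : V) (b : R),
    (forall x, Ap x -> dot y x + b > 0) /\ (forall x, Am x -> dot y x + b < 0).

End Defs.

From HB Require Import structures.
From mathcomp Require Import all_boot all_order all_algebra.
From mathcomp Require Import all_classical all_reals all_analysis.
From mathcomp Require Import ring lra.
Import Order.TTheory GRing.Theory Num.Theory.
Import numFieldTopology.Exports.

Set Implicit Arguments.
Unset Strict Implicit.
Unset Printing Implicit Defensive.

Local Open Scope classical_set_scope.
Local Open Scope ring_scope.

(** Let [K = conv Ap - conv Am], a compact (Caratheodory) convex set, and let
    [xp - xm] be an [N]-least element of [K].  If [N (xp - xm) > 2 dt], where
    [dt = h(yt, bt)], then a ball of radius [r > 2 dt] is strictly separated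
    from [K] by a functional [y] of dual norm at most 1, and a suitable offset
    [b] gives [h(y, b) >= r / 2 > dt], contradicting optimality.  Hence
    [N (xp - xm) <= 2 dt], while the margin inequalities of [(yt, bt)] at [xp]
    and [xm] give [2 dt <= yt^T (xp - xm) <= ||yt||_* N (xp - xm)]: all of these
    are equalities.  For the second part, [(xp - xm) / N (xp - xm)] maximizes
    [yt^T w] on the unit ball of [N], hence is [v(yt)] when [N] is strictly
    convex, and the margin
    inequalities of [(yb, bb)] at [xp] and [xm] give [yb^T (xp - xm) >= 2 db]. *)

Lemma fst_continuous (T U : topologicalType) : continuous (@fst T U).
Proof. by move=> z; exact: cvg_fst. Qed.

Lemma snd_continuous (T U : topologicalType) : continuous (@snd T U).
Proof. by move=> z; exact: cvg_snd. Qed.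

Section Dot.
Variables (R : realType) (d : nat).
Local Notation V := 'rV[R]_d.
Implicit Types x y a b : V.

Lemma dotC x y : dot x y = dot y x.
Proof. by apply: eq_bigr => i _; rewrite mulrC. Qed.

Lemma dotDr y a b : dot y (a + b) = dot y a + dot y b.
Proof. by rewrite /dot -big_split; apply: eq_bigr => i _; rewrite mxE mulrDr. Qed.

Lemma dotDl a b x : dot (a + b) x = dot a x + dot b x.
Proof. by rewrite dotC dotDr !(dotC x). Qed.

Lemma dotZr y (c : R) x : dot y (c *: x) = c * dot y x.
Proof. by rewrite /dot mulr_sumr; apply: eq_bigr => i _; rewrite mxE mulrCA. Qed.

Lemma dotZl (c : R) y x : dot (c *: y) x = c * dot y x.
Proof. by rewrite dotC dotZr dotC. Qed.

Lemma dot0r y : dot y 0 = 0.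
Proof. by have := dotZr y 0 0; rewrite scale0r mul0r. Qed.

Lemma dotNr y x : dot y (- x) = - dot y x.
Proof. by rewrite -scaleN1r dotZr mulN1r. Qed.

Lemma dotNl y x : dot (- y) x = - dot y x.
Proof. by rewrite dotC dotNr dotC. Qed.

Lemma dotBr y a b : dot y (a - b) = dot y a - dot y b.
Proof. by rewrite dotDr dotNr. Qed.

Lemma dotxx_ge0 x : 0 <= dot x x.
Proof. by apply: sumr_ge0 => i _; rewrite -expr2 sqr_ge0. Qed.

Lemma dotxx_gt0 x : x != 0 -> 0 < dot x x.
Proof.
move=> x0; rewrite lt_def dotxx_ge0 andbT; apply: contra x0 => /eqP xx0.
have sq_ge0 (i : 'I_d) : true -> 0 <= x ord0 i * x ord0 i by rewrite -expr2 sqr_ge0.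
apply/eqP/rowP => i; rewrite mxE.
by have /eqP := psumr_eq0P sq_ge0 xx0 (i := i) isT; rewrite mulf_eq0 orbb => /eqP.
Qed.

Lemma coord_le_mx_norm x i : `|x ord0 i| <= `|x|.
Proof.
rewrite [leRHS]/Num.Def.normr /= mx_normrE; apply/bigmax_geP; right.
by exists (ord0, i).
Qed.

Lemma dot_le_mx_norm y x : dot y x <= (\sum_(i < d) `|y ord0 i|) * `|x|.
Proof.
rewrite /dot mulr_suml; apply: ler_sum => i _.
apply: le_trans (ler_norm _) _; rewrite normrM.
exact/ler_wpM2l/coord_le_mx_norm.
Qed.

Lemma dot_continuous y : continuous (dot y).
Proof.
apply: (@continuous_big _ _ +%R 0 xpredT add_continuous) => i _ x.
exact/continuousM/coord_continuous/cst_continuous.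
Qed.

Lemma dotxx_continuous : continuous (fun x : V => dot x x).
Proof.
apply: (@continuous_big _ _ +%R 0 xpredT add_continuous) => i _ x.
exact/continuousM/coord_continuous/coord_continuous.
Qed.

End Dot.

Section ConvexHull.
Variables (R : realType) (d : nat).
Local Notation V := 'rV[R]_d.
Implicit Types (A C : set V) (x z : V).

Definition convex C : Prop :=
  forall x z (t : R), C x -> C z -> 0 <= t <= 1 -> C ((1 - t) *: x + t *: z).

Definition convex_comb A n (l : 'I_n -> R) (p : 'I_n -> V) x : Prop :=
  [/\ forall i, 0 <= l i, \sum_(i < n) l i = 1, forall i, A (p i)
    & x = \sum_(i < n) l i *: p i].

Lemma convex_halfspace (y : V) (b m : R) : convex [set x | m <= dot y x + b].
Proof. by move=> x z t /= mx mz /andP[t0 t1]; rewrite dotDr !dotZr; nra. Qed.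

Lemma convex_diff A C : convex A -> convex C -> convex [set x - z | x in A & z in C].
Proof.
move=> cA cC _ _ t [a1 Aa1 [c1 Cc1 <-]] [a2 Aa2 [c2 Cc2 <-]] t01.
exists ((1 - t) *: a1 + t *: a2); first exact: cA.
exists ((1 - t) *: c1 + t *: c2); first exact: cC.
by rewrite !scalerBr opprD !addrA; congr (_ - _); rewrite addrAC.
Qed.

Lemma compact_diff A C : compact A -> compact C -> compact [set x - z | x in A & z in C].
Proof.
move=> cA cC; rewrite image2E; apply: continuous_compact; last exact: compact_setX.
have -> : uncurry (fun x z => x - z) = (fun z : V * V => z.1 - z.2) by apply/funext => -[].
by apply: continuous_subspaceT => z; exact: sub_continuous.
Qed.

Lemma sub_convhull A : A `<=` convhull A.
Proof.
move=> x Ax; exists 1%N, (fun=> 1), (fun=> x).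
by split=> //; rewrite big_ord1 // scale1r.
Qed.

Lemma convhull_convex A : convex (convhull A).
Proof.
move=> _ _ t [n1 [l1 [p1 [l1_ge0 l1_sum Ap1 ->]]]]
  [n2 [l2 [p2 [l2_ge0 l2_sum Ap2 ->]]]] /andP[t0 t1].
have splitl i : @fintype.split n1 n2 (lshift n2 i) = inl i := unsplitK (inl i).
have splitr i : @fintype.split n1 n2 (rshift n1 i) = inr i := unsplitK (inr i).
exists (n1 + n2)%N,
  (fun k => match @fintype.split n1 n2 k with inl i => (1 - t) * l1 i | inr j => t * l2 j end),
  (fun k => match @fintype.split n1 n2 k with inl i => p1 i | inr j => p2 j end).
split.
- by move=> k; case: (@fintype.split n1 n2 k) => i; rewrite mulr_ge0 ?subr_ge0.
- rewrite big_split_ord /=; under eq_bigr do rewrite splitl.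
  under [X in _ + X]eq_bigr do rewrite splitr.
  by rewrite -!mulr_sumr l1_sum l2_sum !mulr1 subrK.
- by move=> k; case: (@fintype.split n1 n2 k).
- rewrite big_split_ord /= !scaler_sumr.
  by congr (_ + _); apply: eq_bigr => i _; rewrite (splitl, splitr) scalerA.
Qed.

Definition lerp (z : R * V * V) : V := (1 - z.1.1) *: z.1.2 + z.1.1 *: z.2.

Lemma lerp_continuous : continuous lerp.
Proof.
move=> z; apply: cvgD; apply: cvgZ.
- apply: cvgB; first exact: cvg_cst.
  exact: (continuous_comp (@fst_continuous _ _ z) (@fst_continuous _ _ _)).
- exact: (continuous_comp (@fst_continuous _ _ z) (@snd_continuous _ _ _)).
- exact: (continuous_comp (@fst_continuous _ _ z) (@fst_continuous _ _ _)).
- exact: snd_continuous.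
Qed.

(* [hull_iter A n] consists of the convex combinations of [n.+1] points of [A]. *)
Fixpoint hull_iter A n : set V :=
  if n is n'.+1 then lerp @` (`[0, 1] `*` hull_iter A n' `*` A) else A.

Lemma hull_iter_compact A n : compact A -> compact (hull_iter A n).
Proof.
move=> cA; elim: n => [//|n IH] /=.
apply: continuous_compact; first exact: continuous_subspaceT lerp_continuous.
by apply: compact_setX => //; apply: compact_setX => //; exact: segment_compact.
Qed.

Lemma hull_iter_sub_convex A C n : convex C -> A `<=` C -> hull_iter A n `<=` C.
Proof.
move=> cC AC; elim: n => [//|n IH] /= _ [[[t x] a] [[/= t01 hx] Aa] <-].
by apply: cC; [exact: IH | exact: AC | move: t01; rewrite in_itv].
Qed.

Lemma hull_iter_mono A m n : A !=set0 -> (m <= n)%N -> hull_iter A m `<=` hull_iter A n.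
Proof.
move=> [a Aa]; elim: n => [|n IH]; first by rewrite leqn0 => /eqP ->.
rewrite leq_eqVlt ltnS => /predU1P[-> // | /IH mn x /mn hx].
exists ((0, x), a); last by rewrite /lerp /= subr0 scale1r scale0r addr0.
by split=> //; split=> //=; rewrite in_itv /= lexx ler01.
Qed.

Lemma convex_comb_ord0 A (l : 'I_0 -> R) p x : ~ convex_comb A l p x.
Proof. by case=> _; rewrite big_ord0 => /esym/eqP; rewrite oner_eq0. Qed.

Lemma convex_comb_hull_iter A k (l : 'I_k.+1 -> R) p x :
  convex_comb A l p x -> hull_iter A k x.
Proof.
elim: k l p x => [|k IH] l p x [l_ge0 l_sum Ap ->].
  by rewrite big_ord1 in l_sum; rewrite big_ord1 l_sum scale1r.
rewrite big_ord_recr /=; rewrite big_ord_recr /= in l_sum.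
set t := l ord_max in l_sum *.
set w := widen_ord (leqnSn k.+1) in l_sum *.
have rest_ge0 : 0 <= \sum_(i < k.+1) l (w i) by apply: sumr_ge0.
have [t1|t_neq1] := eqVneq t 1.
  have rest0 : \sum_(i < k.+1) l (w i) = 0 by rewrite t1 in l_sum; lra.
  rewrite big1 ?add0r; last by move=> i _; rewrite (psumr_eq0P _ rest0) ?scale0r.
  exists ((1, p ord0), p ord_max); last by rewrite /lerp /= subrr scale0r add0r t1.
  split; [split=> /= | exact: Ap]; first by rewrite in_itv /= ler01 lexx.
  by apply: (@hull_iter_mono A 0); [exists (p ord0) | | exact: Ap].
have t_lt1 : 0 < 1 - t by rewrite subr_gt0 lt_neqAle t_neq1 -l_sum lerDr.
exists ((t, \sum_(i < k.+1) (l (w i) / (1 - t)) *: p (w i)), p ord_max).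
  split; [split=> /= | exact: Ap]; first by rewrite in_itv /= l_ge0 -l_sum lerDr.
  apply: (IH (fun i => l (w i) / (1 - t)) (p \o w)); split=> //.
  - by move=> i; apply: divr_ge0 => //; exact: ltW.
  - by rewrite -mulr_suml (_ : \sum__ _ = 1 - t) ?mulfV ?gt_eqF //; lra.
  - by move=> i; exact: Ap.
rewrite /lerp /=; congr (_ + _); rewrite scaler_sumr; apply: eq_bigr => i _.
by rewrite scalerA mulrCA mulfV ?mulr1 // gt_eqF.
Qed.

Lemma convhull_sub_convex A C : convex C -> A `<=` C -> convhull A `<=` C.
Proof.
move=> cC AC x [[|n] [l [p cx]]]; first by case: (convex_comb_ord0 cx).
exact/(hull_iter_sub_convex cC AC)/convex_comb_hull_iter/cx.
Qed.

Lemma convex_comb_drop A n (l : 'I_n.+1 -> R) p x j : l j = 0 ->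
  convex_comb A l p x -> convex_comb A (fun i => l (lift j i)) (fun i => p (lift j i)) x.
Proof.
move=> lj [l_ge0 l_sum Ap ->]; split=> //.
  by rewrite (bigD1_ord j) //= lj add0r in l_sum.
by rewrite (bigD1_ord j) //= lj scale0r add0r.
Qed.

Lemma convex_comb_shift A n (l mu : 'I_n -> R) p x (c : R) :
  \sum_(i < n) mu i = 0 -> \sum_(i < n) mu i *: p i = 0 ->
  (forall i, c * mu i <= l i) ->
  convex_comb A l p x -> convex_comb A (fun i => l i - c * mu i) p x.
Proof.
move=> mu_sum mu_p cmu_le [_ l_sum Ap ->]; split=> //.
- by move=> i; rewrite subr_ge0.
- by rewrite sumrB -mulr_sumr mu_sum mulr0 subr0.
- under [RHS]eq_bigr do rewrite scalerBl -scalerA.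
  by rewrite sumrB -scaler_sumr mu_p scaler0 subr0.
Qed.

Lemma affine_dependence n (p : 'I_n.+1 -> V) : (d < n)%N ->
  exists mu : 'I_n.+1 -> R, [/\ exists i, mu i != 0, \sum_(i < n.+1) mu i = 0
    & \sum_(i < n.+1) mu i *: p i = 0].
Proof.
move=> dn.
(* a left kernel vector of the rows [(p i, 1)] is an affine dependence *)
pose M : 'M[R]_(n.+1, d + 1) := \matrix_i row_mx (p i) 1.
pose u := nz_row (kermx M).
have uM : u *m M = 0 by apply/sub_kermxP; exact: nz_row_sub.
have u0 : u != 0.
  rewrite nz_row_eq0 kermx_eq0 /row_free; apply: contraTneq (rank_leq_col M) => ->.
  by rewrite -ltnNge addn1 ltnS.
have uM_col k : \sum_(i < n.+1) u 0 i * row_mx (p i) 1 0 k = 0.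
  have /rowP/(_ k) := uM; rewrite !mxE => uMk; rewrite -[RHS]uMk.
  by apply: eq_bigr => i _; rewrite /M [in RHS]mxE.
exists (fun i => u 0 i); split.
- apply/existsP; apply: contraNT u0 => /existsPn u0.
  by apply/eqP/rowP => i; rewrite mxE; apply/eqP/negPn/u0.
- rewrite -[RHS](uM_col (rshift d ord0)); apply: eq_bigr => i _.
  by rewrite row_mxEr mxE mulr1.
- apply/rowP => k; rewrite summxE mxE -[RHS](uM_col (lshift 1 k)).
  by apply: eq_bigr => i _; rewrite row_mxEl mxE.
Qed.

Lemma caratheodory_step A n (l : 'I_n.+1 -> R) p x : (d < n)%N ->
  convex_comb A l p x -> exists l' p', @convex_comb A n l' p' x.
Proof.
move=> dn cx; case: (cx) => l_ge0 _ _ _.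
have [[j lj]|l_neq0] := pselect (exists j, l j = 0).
  by exists (fun i => l (lift j i)), (fun i => p (lift j i)); exact: convex_comb_drop.
have l_gt0 i : 0 < l i.
  by rewrite lt_def l_ge0 andbT; apply/eqP => li0; apply: l_neq0; exists i.
have [mu [[i1 mu_i1] mu_sum mu_p]] := affine_dependence p dn.
have [i2 mu_i2] : exists i, 0 < mu i.
  apply: contrapT => mu_le0; have Nmu_ge0 i : true -> 0 <= - mu i.
    by move=> _; rewrite oppr_ge0 leNgt; apply/negP => mu_gt0; apply: mu_le0; exists i.
  have Nmu_sum : \sum_(i < n.+1) - mu i = 0 by rewrite sumrN mu_sum oppr0.
  by have /eqP := psumr_eq0P Nmu_ge0 Nmu_sum (i := i1) isT; rewrite oppr_eq0 (negbTE mu_i1).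
(* move from [l] along [- mu] until the first weight vanishes *)
have [j _ j_max] := @arg_maxP _ _ _ i2 xpredT (fun i => mu i / l i) isT.
set s := mu j / l j in j_max.
have s_gt0 : 0 < s := lt_le_trans (divr_gt0 mu_i2 (l_gt0 i2)) (j_max i2 isT).
have mu_j : mu j != 0 by apply: contraTneq s_gt0 => mu_j0; rewrite /s mu_j0 mul0r ltxx.
have cx' : convex_comb A (fun i => l i - s^-1 * mu i) p x.
  apply: convex_comb_shift mu_sum mu_p _ cx => i.
  by rewrite mulrC ler_pdivrMr // mulrC -ler_pdivrMr //; exact: j_max.
exists (fun i => l (lift j i) - s^-1 * mu (lift j i)), (fun i => p (lift j i)).
by apply: (convex_comb_drop _ cx'); rewrite /s invf_div divfK ?subrr.
Qed.

Lemma caratheodory A n (l : 'I_n -> R) p x : convex_comb A l p x ->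
  exists2 k, (k <= d)%N & exists l' p', @convex_comb A k.+1 l' p' x.
Proof.
elim/ltn_ind: n l p => -[|n] IH l p cx; first by case: (convex_comb_ord0 cx).
have [nd|dn] := leqP n d; first by exists n => //; exists l, p.
by have [l' [p' /IH]] := caratheodory_step dn cx; apply.
Qed.

Lemma convhull_hull_iter A : A !=set0 -> convhull A = hull_iter A d.
Proof.
move=> A0; apply/seteqP; split.
  move=> x [n [l [p /caratheodory[k kd [l' [p' cx]]]]]].
  exact/(hull_iter_mono A0 kd)/convex_comb_hull_iter/cx.
exact: hull_iter_sub_convex (@convhull_convex A) (@sub_convhull A).
Qed.

Lemma convhull_compact A : compact A -> compact (convhull A).
Proof.
move=> cA; have [A0|A0] := pselect (A !=set0).
  by rewrite convhull_hull_iter //; exact: hull_iter_compact.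
rewrite (_ : convhull A = set0); first exact: compact0.
apply/seteqP; split=> // x [[|n] [l [p cx]]]; first by case: (convex_comb_ord0 cx).
by case: cx => _ _ Ap _; apply: A0; exists (p ord0).
Qed.

End ConvexHull.

Section Separation.
Variables (R : realType) (d : nat).
Local Notation V := 'rV[R]_d.
Implicit Types (K M : set V) (p x z : V).

Lemma least_norm_point_ineq M p : convex M -> M p ->
  (forall z, M z -> dot p p <= dot z z) -> forall z, M z -> dot p p <= dot p z.
Proof.
move=> cM Mp p_min z Mz; set q := z - p.
have zE : z = p + q by rewrite /q addrC subrK.
rewrite zE dotDr lerDl; set X := dot p q; set Q := dot q q.
have Q_ge0 : 0 <= Q := dotxx_ge0 q.
rewrite leNgt; apply/negP => X_lt0.
(* the step [t] satisfies [t Q = (t - 1) X], so [|p + t q|^2 - |p|^2 = t (1 + t) X < 0] *)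
pose t := - X / (Q - X).
have QX : 0 < Q - X by lra.
have t_gt0 : 0 < t by rewrite divr_gt0 // oppr_gt0.
have t_le1 : t <= 1 by rewrite ler_pdivrMr // mul1r; lra.
have tQ : t * Q = - X + t * X by rewrite -[- X](divfK (lt0r_neq0 QX)) -/t; ring.
have t01 : 0 <= t <= 1 by rewrite (ltW t_gt0) t_le1.
have := p_min _ (cM p z t Mp Mz t01).
have -> : (1 - t) *: p + t *: z = p + t *: q.
  by rewrite zE scalerDr scalerBl scale1r addrA subrK.
rewrite dotDl !dotDr !dotZl !dotZr (dotC q p) -/X -/Q tQ.
have : t * X < 0 by rewrite pmulr_rlt0.
nra.
Qed.

Lemma compact_convex_separation K1 K2 : compact K1 -> compact K2 ->
  convex K1 -> convex K2 -> K1 !=set0 -> K2 !=set0 -> (forall x, K1 x -> ~ K2 x) ->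
  exists p, forall x z, K1 x -> K2 z -> dot p z < dot p x.
Proof.
move=> cK1 cK2 vK1 vK2 [x1 K1x1] [x2 K2x2] disj.
pose M := [set x - z | x in K1 & z in K2].
have M0 : M !=set0 by exists (x1 - x2); exists x1 => //; exists x2.
have [p /set_mem Mp p_min] := EVT_min_rV M0 (compact_diff cK1 cK2)
  (continuous_subspaceT (@dotxx_continuous R d)).
have p0 : p != 0.
  apply: contraPneq Mp => -> [x K1x [z K2z /eqP]].
  by rewrite subr_eq0 => /eqP xz; apply: (disj x); rewrite // xz.
exists p => x z K1x K2z.
have M_xz : M (x - z) by exists x => //; exists z.
have := least_norm_point_ineq (convex_diff vK1 vK2) Mp
  (fun z Mz => p_min z (mem_set Mz)) M_xz.
by rewrite dotBr; have := dotxx_gt0 p0; lra.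
Qed.

End Separation.

Section Margin.
Variables (R : realType) (d : nat).
Local Notation V := 'rV[R]_d.
Implicit Types (A B : set V) (x y : V).

Lemma margin_le_pos y (b : R) A B x : compact A -> A x -> margin y b A B <= dot y x + b.
Proof.
move=> cA Ax; have A0 : A !=set0 by exists x.
have [a _ a_min] := EVT_min_rV A0 cA (continuous_subspaceT (dot_continuous (y := y))).
rewrite /margin ge_min; apply/orP; left; apply: ge_inf; last by exists x.
by exists (dot y a + b) => _ [z Az <-]; rewrite lerD2r; apply: a_min; rewrite inE.
Qed.

Lemma margin_le_neg y (b : R) A B x : compact B -> B x -> margin y b A B <= - dot y x - b.
Proof.
move=> cB Bx; have B0 : B !=set0 by exists x.
have [a _ a_max] := EVT_max_rV B0 cB (continuous_subspaceT (dot_continuous (y := y))).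
rewrite /margin ge_min; apply/orP; right; apply: ge_inf; last by exists x.
by exists (- dot y a - b) => _ [z Bz <-]; rewrite lerD2r lerN2; apply: a_max; rewrite inE.
Qed.

Lemma margin_le_pos_hull y (b : R) A B x :
  compact A -> convhull A x -> margin y b A B <= dot y x + b.
Proof.
move=> cA.
move/(convhull_sub_convex (convex_halfspace (y := y) (b := b) (m := margin y b A B))).
by apply=> a Aa; exact: margin_le_pos.
Qed.

Lemma margin_le_neg_hull y (b : R) A B x :
  compact B -> convhull B x -> margin y b A B <= - dot y x - b.
Proof.
move=> cB.
move/(convhull_sub_convex (convex_halfspace (y := - y) (b := - b) (m := margin y b A B))).
by rewrite /= dotNl; apply=> a Ba /=; rewrite dotNl; exact: margin_le_neg.
Qed.

Lemma margin_ge y (b m : R) A B : A !=set0 -> B !=set0 ->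
  (forall x, A x -> m <= dot y x + b) -> (forall x, B x -> m <= - dot y x - b) ->
  m <= margin y b A B.
Proof.
move=> [a Aa] [c Bc] mA mB; rewrite /margin le_min; apply/andP; split.
  by apply: lb_le_inf; [exists (dot y a + b), a | move=> _ [x Ax <-]; exact: mA].
by apply: lb_le_inf; [exists (- dot y c - b), c | move=> _ [x Bx <-]; exact: mB].
Qed.

Lemma margin_of_gap y (r : R) A B : compact A -> A !=set0 -> B !=set0 ->
  (forall a z, A a -> B z -> r <= dot y a - dot y z) ->
  exists b, r / 2 <= margin y b A B.
Proof.
move=> cA A0 B0 gap.
have [a /set_mem Aa a_min] :=
  EVT_min_rV A0 cA (continuous_subspaceT (dot_continuous (y := y))).
exists (r / 2 - dot y a); apply: margin_ge => // x Ax.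
  by have := a_min x (mem_set Ax); lra.
by have := gap a x Aa Ax; lra.
Qed.

End Margin.

Section Norm.
Variables (R : realType) (d : nat) (N : 'rV[R]_d -> R).
Hypothesis normN : is_norm N.
Local Notation V := 'rV[R]_d.
Implicit Types (K : set V) (x y u v w : V).

Lemma N_ge0 x : 0 <= N x. Proof. by case: normN. Qed.

Lemma N_scale (c : R) x : N (c *: x) = `|c| * N x. Proof. by case: normN. Qed.

Lemma N_triangle x y : N (x + y) <= N x + N y. Proof. by case: normN. Qed.

Lemma N0 : N 0 = 0. Proof. by rewrite -(scale0r 0) N_scale normr0 mul0r. Qed.

Lemma N_opp x : N (- x) = N x. Proof. by rewrite -scaleN1r N_scale normrN normr1 mul1r. Qed.

Lemma N_gt0 x : x != 0 -> 0 < N x.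
Proof.
case: normN => _ N_eq0 _ _ x0; rewrite lt_def N_ge0 andbT.
by apply: contra x0 => /eqP/N_eq0 ->.
Qed.

Lemma N_sum n (F : 'I_n -> V) : N (\sum_(i < n) F i) <= \sum_(i < n) N (F i).
Proof.
elim/big_ind2: _ => [|a b c e ab ce|//]; first by rewrite N0.
exact: le_trans (N_triangle _ _) (lerD ab ce).
Qed.

Lemma N_dist_le x y : `|N x - N y| <= N (x - y).
Proof.
have := N_triangle (x - y) y; have := N_triangle (y - x) x.
by rewrite !subrK -opprB N_opp ler_distl; lra.
Qed.

Lemma N_le_mx_norm : exists2 k, 0 <= k & forall x, N x <= k * `|x|.
Proof.
exists (\sum_(i < d) N 'e_i); first by apply: sumr_ge0 => i _; exact: N_ge0.
move=> x; rewrite {1}(row_sum_delta x); apply: le_trans (N_sum _) _.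
rewrite mulr_suml; apply: ler_sum => i _; rewrite N_scale mulrC.
exact/ler_wpM2l/coord_le_mx_norm/N_ge0.
Qed.

Lemma N_continuous : continuous N.
Proof.
have [k k_ge0 N_le] := N_le_mx_norm.
move=> x; have x_filter : ProperFilter (nbhs x) := nbhs_pfilter x.
apply/cvgrPdist_lt => e e_gt0.
have ek : 0 < e / (k + 1) by rewrite divr_gt0 // ltr_wpDl.
near=> z; apply: le_lt_trans (N_dist_le x z) _; apply: le_lt_trans (N_le _) _.
have : `|x - z| < e / (k + 1).
  by near: z; apply: filterS (nbhsx_ballx x _ ek) => z; rewrite -ball_normE.
by rewrite ltr_pdivlMr ?ltr_wpDl //; have := normr_ge0 (x - z); nra.
Unshelve. all: by end_near.
Qed.

Lemma mx_norm_le_N : exists2 c, 0 < c & forall x, c * `|x| <= N x.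
Proof.
have [[x0 x0_neq0]|all0] := pselect (exists x : V, x != 0); last first.
  exists 1 => // x; have -> : x = 0 by apply: contrapT => /eqP x_neq0; apply: all0; exists x.
  by rewrite normr0 mulr0 N0.
pose S := [set x : V | `|x| = 1].
have normalize x : x != 0 -> S (`|x|^-1 *: x).
  by move=> x_neq0; rewrite /S /= normrZ normfV normr_id mulVf ?normr_eq0.
have cS : compact S.
  apply: bounded_closed_compact.
    by exists 1; split=> // M M_gt1 x /= ->; exact: ltW.
  exact: (continuous_closedP _).1 norm_continuous _ (@closed_eq _ 1).
have [z /set_mem Sz z_min] := EVT_min_rV (ex_intro _ _ (normalize _ x0_neq0)) cS
  (continuous_subspaceT N_continuous).
have z0 : z != 0.
  by apply: contraPneq Sz => ->; rewrite /S /= normr0 => /esym/eqP; rewrite oner_eq0.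
exists (N z); first exact: N_gt0.
move=> x; have [->|x_neq0] := eqVneq x 0; first by rewrite normr0 mulr0 N0.
have := z_min _ (mem_set (normalize _ x_neq0)).
by rewrite N_scale normfV normr_id ler_pdivlMl ?normr_gt0 // mulrC.
Qed.

Lemma N_ball_compact (r : R) : compact [set w | N w <= r].
Proof.
have [c c_gt0 N_ge] := mx_norm_le_N.
apply: bounded_closed_compact.
  exists (r / c); split=> [|M rM w /= Nw]; first exact: num_real.
  apply/ltW/le_lt_trans/rM; rewrite ler_pdivlMr // mulrC; exact: le_trans (N_ge w) Nw.
exact: (continuous_closedP _).1 N_continuous _ (@closed_le _ r).
Qed.

Lemma N_ball_convex (r : R) : convex [set w | N w <= r].
Proof.
move=> w1 w2 t /= Nw1 Nw2 /andP[t0 t1]; apply: le_trans (N_triangle _ _) _.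
rewrite !N_scale !ger0_norm ?subr_ge0 //; nra.
Qed.

Lemma dualnorm_has_ubound y : has_ubound [set dot y w | w in [set w | N w <= 1]].
Proof.
have [c c_gt0 N_ge] := mx_norm_le_N.
exists ((\sum_(i < d) `|y ord0 i|) / c) => _ [w Nw <-].
apply: le_trans (dot_le_mx_norm y w) _; apply: ler_wpM2l; first exact: sumr_ge0.
by rewrite -(ler_pM2l c_gt0) mulfV ?gt_eqF //; exact: le_trans (N_ge w) Nw.
Qed.

Lemma dot_le_dualnorm y w : N w <= 1 -> dot y w <= dualnorm N y.
Proof. by move=> Nw; apply: (ub_le_sup (dualnorm_has_ubound y)); exists w. Qed.

Lemma dualnorm_le y (m : R) : (forall w, N w <= 1 -> dot y w <= m) -> dualnorm N y <= m.
Proof.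
move=> le_m; apply: ge_sup; last by move=> _ [w Nw <-]; exact: le_m.
by exists (dot y 0), 0 => //=; rewrite N0.
Qed.

Lemma dualnorm_ge0 y : 0 <= dualnorm N y.
Proof. by have := @dot_le_dualnorm y 0; rewrite dot0r N0; apply. Qed.

Lemma dot_le_dualnorm_mul y w : dot y w <= dualnorm N y * N w.
Proof.
have [->|w0] := eqVneq w 0; first by rewrite dot0r N0 mulr0.
have Nw_gt0 := N_gt0 w0.
have := @dot_le_dualnorm y ((N w)^-1 *: w).
rewrite N_scale dotZr ger0_norm ?invr_ge0 ?N_ge0 // mulVf ?gt_eqF // lexx.
by rewrite mulrC ler_pdivrMr // => /(_ isT).
Qed.

Lemma dualnormZ_le (c : R) y : 0 <= c -> dualnorm N (c *: y) <= c * dualnorm N y.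
Proof.
move=> c_ge0; apply: dualnorm_le => w Nw; rewrite dotZl.
exact/ler_wpM2l/dot_le_dualnorm.
Qed.

Lemma is_v_unique y u v : strictly_convex N -> 0 < dualnorm N y ->
  is_v N y u -> is_v N y v -> u = v.
Proof.
move=> strictN y_gt0 [Nu yu] [Nv yv].
have [[a [b [ab_neq0 abE]]]|not_col] := pselect (collinear u v).
  have /eqP : dot y (a *: u + b *: v) = 0 by rewrite abE dot0r.
  rewrite dotDr !dotZr yu yv -mulrDl mulf_eq0 (gt_eqF y_gt0) orbF addr_eq0 => /eqP aE.
  have b_neq0 : b != 0 by case: ab_neq0 => //; rewrite aE oppr_eq0.
  move: abE; rewrite aE scaleNr addrC -scalerBr => /eqP.
  by rewrite scaler_eq0 (negbTE b_neq0) subr_eq0 => /eqP ->.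
(* the midpoint [z] would lie strictly inside the ball while still attaining the maximum *)
have half01 : 0 < (2^-1 : R) < 1 by rewrite invr_gt0 ltr0n /= invf_lt1 // ltr1n.
have := strictN _ _ _ half01 not_col; set z := _ + _ => Nz_lt.
have yz : dot y z = dualnorm N y by rewrite dotDr !dotZr yu yv; ring.
have z_neq0 : z != 0 by apply: contraTneq y_gt0 => z0; rewrite -yz z0 dot0r ltxx.
have := dot_le_dualnorm_mul y z; rewrite yz -{1}[dualnorm N y]mulr1 ler_pM2l //.
have : N z < 1 by apply: lt_le_trans Nz_lt _; lra.
by move=> /lt_geF ->.
Qed.

Lemma ball_separation K (r : R) : compact K -> convex K -> K !=set0 -> 0 < r ->
  (forall e, K e -> r < N e) -> exists y, dualnorm N y <= 1 /\ forall e, K e -> r <= dot y e.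
Proof.
move=> cK vK [e0 Ke0] r_gt0 K_far.
have ball0 : [set w | N w <= r] 0 by rewrite /= N0; exact: ltW.
have disj e : K e -> ~ N e <= r by move/K_far; rewrite ltNge => /negP.
have [p sep] := compact_convex_separation cK (@N_ball_compact r) vK (@N_ball_convex r)
  (ex_intro _ _ Ke0) (ex_intro _ _ ball0) disj.
have p_gt0 : 0 < dualnorm N p.
  have := sep e0 0 Ke0 ball0; rewrite dot0r => pe0.
  have := dot_le_dualnorm_mul p e0; have := dualnorm_ge0 p; have := N_ge0 e0; nra.
exists ((dualnorm N p)^-1 *: p); split=> [|e Ke].
  have inv_ge0 : 0 <= (dualnorm N p)^-1 by rewrite invr_ge0; exact: ltW.
  by apply: le_trans (dualnormZ_le p inv_ge0) _; rewrite mulVf ?gt_eqF.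
rewrite dotZl ler_pdivlMl // -ler_pdivlMr //; apply: dualnorm_le => w Nw.
rewrite ler_pdivlMr // mulrC -dotZr; apply/ltW/sep => //=.
by rewrite N_scale (ger0_norm (ltW r_gt0)); exact: ler_piMr (ltW r_gt0) Nw.
Qed.

Section OptimalMargin.
Variables (Ap Am : set V) (yt : V) (bt : R).
Hypotheses (cAp : compact Ap) (cAm : compact Am) (Ap0 : Ap !=set0) (Am0 : Am !=set0).
Hypothesis yt_le1 : dualnorm N yt <= 1.
Hypothesis yt_opt : forall y b, dualnorm N y <= 1 -> margin y b Ap Am <= margin yt bt Ap Am.
Hypothesis margin_gt0 : 0 < margin yt bt Ap Am.
Local Notation dt := (margin yt bt Ap Am).

Lemma hull_gap_le : exists xp xm,
  [/\ convhull Ap xp, convhull Am xm & N (xp - xm) <= 2 * dt].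
Proof.
pose H := convhull Ap `*` convhull Am.
have H0 : H !=set0.
  by case: Ap0 => a Aa; case: Am0 => m Am_m; exists (a, m); split; exact: sub_convhull.
have gap_continuous : continuous (fun z : V * V => N (z.1 - z.2)).
  by move=> z; apply: continuous_comp; [exact: sub_continuous | exact: N_continuous].
have [[xp xm] /set_mem [/= Hp Hm] gap_min] : exists2 c : V * V, c \in H &
    forall z, z \in H -> N (c.1 - c.2) <= N (z.1 - z.2).
  apply: compact_EVT_min H0 _ (continuous_subspaceT gap_continuous).
  exact: compact_setX (convhull_compact cAp) (convhull_compact cAm).
exists xp, xm; split=> //; rewrite leNgt; apply/negP => gap_gt.
pose r := (2 * dt + N (xp - xm)) / 2.
have r_gt0 : 0 < r by rewrite /r; have := margin_gt0; lra.
pose K := [set x - z | x in convhull Ap & z in convhull Am].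
have K0 : K !=set0.
  by case: H0 => -[a m] [/= Ha Hm']; exists (a - m); exists a => //; exists m.
have K_far e : K e -> r < N e.
  move=> [x Hx [z Hz <-]]; apply: lt_le_trans (gap_min (x, z) (mem_set _)) => //.
  by rewrite /r; lra.
have [y [y_le1 y_sep]] := ball_separation
  (compact_diff (convhull_compact cAp) (convhull_compact cAm))
  (convex_diff (@convhull_convex _ _ Ap) (@convhull_convex _ _ Am))
  K0 r_gt0 K_far.
have [b margin_ge] : exists b, r / 2 <= margin y b Ap Am.
  apply: margin_of_gap cAp Ap0 Am0 _ => a z Aa Am_z; rewrite -dotBr; apply: y_sep.
  by exists a; [exact: sub_convhull | exists z => //; exact: sub_convhull].
by have := yt_opt b y_le1; rewrite /r in margin_ge; lra.
Qed.

Lemma optimal_hull_points : exists xp xm,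
  [/\ convhull Ap xp, convhull Am xm, dualnorm N yt = 1, N (xp - xm) = 2 * dt
    & dt = dot yt xp + bt /\ dt = - dot yt xm - bt].
Proof.
have [xp [xm [Hp Hm gap_le]]] := hull_gap_le.
have le_p := margin_le_pos_hull yt bt Am cAp Hp.
have le_m := margin_le_neg_hull yt bt Ap cAm Hm.
have := dot_le_dualnorm_mul yt (xp - xm); rewrite dotBr => holder.
have := ler_piMl (N_ge0 (xp - xm)) yt_le1 => s_le.
have gapE : N (xp - xm) = 2 * dt by lra.
exists xp, xm; split=> //; last by split; lra.
have gap_gt0 : 0 < N (xp - xm) by rewrite gapE; have := margin_gt0; lra.
by apply: (mulIf (lt0r_neq0 gap_gt0)); rewrite mul1r; lra.
Qed.

End OptimalMargin.

End Norm.

Theorem mainTheorem5 (R : realType) (d : nat) (N : 'rV[R]_d -> R)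
  (Ap Am : set 'rV[R]_d) (yt : 'rV[R]_d) (bt : R) :
  is_norm N ->
  compact Ap -> compact Am -> Ap !=set0 -> Am !=set0 ->
  linearly_separable Ap Am ->
  dualnorm N yt <= 1 ->
  (forall (y : 'rV[R]_d) (b : R), dualnorm N y <= 1 ->
     margin y b Ap Am <= margin yt bt Ap Am) ->
  0 < margin yt bt Ap Am ->
  (exists xp xm : 'rV[R]_d,
     [/\ convhull Ap xp, convhull Am xm &
       [/\ dot yt (xp - xm) = N (xp - xm) * dualnorm N yt,
         margin yt bt Ap Am * dualnorm N yt = dot yt xp + bt,
         margin yt bt Ap Am * dualnorm N yt = - dot yt xm - bt,
         margin yt bt Ap Am = N (xp - xm) / 2
       & bt = - dot yt (xp + xm) / 2]])
  /\
  (strictly_convex N -> strictly_convex (dualnorm N) ->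
   forall (yb : 'rV[R]_d) (bb db : R),
     0 < db -> db <= margin yb bb Ap Am ->
     forall v : 'rV[R]_d, is_v N yt v ->
       db / margin yt bt Ap Am <= dot yb v /\ 0 < db / margin yt bt Ap Am).
Proof.
move=> normN cAp cAm Ap0 Am0 _ yt_le1 yt_opt dt_gt0.
have [xp [xm [Hp Hm yt1 gapE [dt_p dt_m]]]] :=
  optimal_hull_points normN cAp cAm Ap0 Am0 yt_le1 yt_opt dt_gt0.
set dt := margin yt bt Ap Am in dt_gt0 gapE dt_p dt_m *.
split.
  exists xp, xm; split=> //; rewrite yt1 !mulr1 dotBr ?dotDr; split; lra.
move=> strictN _ yb bb db db_gt0 db_le v v_max.
have gap_gt0 : 0 < N (xp - xm) by rewrite gapE; lra.
pose u := (N (xp - xm))^-1 *: (xp - xm).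
have u_max : is_v N yt u.
  split; first by rewrite /u N_scale // gtr0_norm ?invr_gt0 // mulVf ?gt_eqF.
  rewrite yt1 /u dotZr dotBr (_ : _ - _ = N (xp - xm)) ?mulVf ?gt_eqF //; lra.
have db_p := le_trans db_le (margin_le_pos_hull yb bb Am cAp Hp).
have db_m := le_trans db_le (margin_le_neg_hull yb bb Ap cAm Hm).
rewrite (is_v_unique normN strictN _ v_max u_max) ?yt1 // /u dotZr dotBr gapE.
split; last exact: divr_gt0.
rewrite invfM mulrAC ler_pM2r ?invr_gt0 // ler_pdivlMl //; lra.
Qed.
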